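(* Let $K$ be a field and $X=\{y_{ij}\mid i,j\in\mathbb N,\ i\ge j\}$. For all $b_0,b_1\in K[X]$ the set $(\mathrm{Inc}(\mathbb N)b_0)\times(\mathrm{Inc}(\mathbb N)b_1)$ is the union of finitely many $\mathrm{Inc}(\mathbb N)$-orbits under the diagonal action.
   Context: $\mathrm{Inc}(\mathbb N)$ is the monoid of strictly increasing maps $\pi:\mathbb N\to\mathbb N$, acting on $K[X]$ by ring homomorphisms with $\pi y_{ij}=y_{\pi(i)\pi(j)}$; the diagonal action on $K[X]\times K[X]$ is $\pi(f,h)=(\pi f,\pi h)$, and an orbit is a set $\{\pi(f,h)\mid \pi\in\mathrm{Inc}(\mathbb N)\}$. *)

From HB Require Import structures.
From mathcomp Require Import all_boot all_order all_algebra.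
From mathcomp Require Import finmap.
From mathcomp Require Import monalg.

Set Implicit Arguments.
Unset Strict Implicit.
Unset Printing Implicit Defensive.

Import GRing.Theory.
Local Open Scope ring_scope.

(* The index set of the variables: pairs (i, j) of naturals with i >= j.
   The element (i, j) stands for the variable y_ij. *)
Definition Var : Type := {p : nat * nat | (p.2 <= p.1)%N}.

Definition KX (K : fieldType) := {malg K[{cmonom Var}]}.

Definition yvar (K : fieldType) (v : Var) : KX K := << ucm v >>.

Record Inc := MkInc {
  inc_fun :> nat -> nat;
  inc_mono : forall i j : nat, (i < j)%N -> (inc_fun i < inc_fun j)%N
}.

Lemma inc_le (pi : Inc) (i j : nat) : (j <= i)%N -> (pi j <= pi i)%N.
Proof.
rewrite leq_eqVlt => /orP [/eqP -> //|/inc_mono/ltnW //].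
Qed.

Definition inc_var (pi : Inc) (v : Var) : Var :=
  exist _ (pi (val v).1, pi (val v).2) (inc_le pi (valP v)).

(* The action of pi on K[X]: the K-algebra homomorphism (substitution)
   sending each variable y_ij to y_{pi(i) pi(j)}. *)
Definition inc_act (K : fieldType) (pi : Inc) (f : KX K) : KX K :=
  mmap (fun c : K => c%:MP : KX K)
       (fun m : {cmonom Var} =>
          \prod_(v <- finsupp (cmonom_val m)) yvar K (inc_var pi v) ^+ (m v))
       f.

Definition orbit1 (K : fieldType) (f : KX K) : KX K -> Prop :=
  fun g => exists pi : Inc, g = inc_act pi f.

Definition orbit2 (K : fieldType) (p : KX K * KX K) : KX K * KX K -> Prop :=
  fun q => exists pi : Inc, q = (inc_act pi p.1, inc_act pi p.2).

(* The action of pi on a polynomial f only depends on the values of pi below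
   a bound M on the indices of the variables of f.  Given pi and sigma, let s
   be the sorted list of the at most 2M values pi i, sigma i (i < M) and tau
   the increasing map enumerating s.  On [0, M) we get pi = tau o pi' and
   sigma = tau o sigma', where pi' and sigma' record the ranks of these values
   in s, so they are increasing maps [0, M) -> [0, 2M), of which there are
   finitely many.  Hence (pi b0, sigma b1) = tau (pi' b0, sigma' b1) lies in
   one of finitely many diagonal orbits. *)

From HB Require Import structures.
From mathcomp Require Import all_boot all_order all_algebra.
From mathcomp Require Import finmap monalg.

Set Implicit Arguments.
Unset Strict Implicit.
Unset Printing Implicit Defensive.

Definition inc_comp (tau pi : Inc) : Inc :=
  MkInc (fun i j (lt_ij : i < j) => inc_mono tau (inc_mono pi lt_ij)).

Lemma inc_var_comp (tau pi : Inc) (v : Var) :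
  inc_var tau (inc_var pi v) = inc_var (inc_comp tau pi) v.
Proof. exact: val_inj. Qed.

Section SeqInc.
Variables (N : nat) (A : seq nat).

Let enumA := [seq k <- iota 0 N | k \in A].

Let enumA_sorted : sorted ltn enumA.
Proof. exact/sorted_filter/iota_ltn_sorted/ltn_trans. Qed.

(* seq_inc N A lists the elements of A below N in increasing order and then
   continues with N + i, which makes it strictly increasing for every A. *)
Definition seq_inc_fun (i : nat) : nat := nth (N + i) enumA i.

Lemma seq_inc_fun_mono i j : i < j -> seq_inc_fun i < seq_inc_fun j.
Proof.
have enumA_lt k : k < size enumA -> nth 0 enumA k < N.
  by move=> /(mem_nth 0); rewrite mem_filter mem_iota => /andP[_ /andP[]].
rewrite /seq_inc_fun => lt_ij; case: (ltnP j (size enumA)) => [lt_j|le_j].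
  have lt_i := ltn_trans lt_ij lt_j.
  rewrite !(set_nth_default 0) //.
  exact: (sorted_ltn_nth ltn_trans) lt_ij.
case: (ltnP i (size enumA)) => [lt_i|le_i]; last by rewrite !nth_default // ltn_add2l.
rewrite [nth _ _ j]nth_default // (set_nth_default 0) //.
exact: leq_trans (enumA_lt _ lt_i) (leq_addr _ _).
Qed.

Definition seq_inc : Inc := MkInc seq_inc_fun_mono.

Lemma seq_incE i : sorted ltn A -> all (gtn N) A -> i < size A ->
  seq_inc i = nth 0 A i.
Proof.
move=> A_sorted A_lt lt_i; rewrite /= /seq_inc_fun; have -> : enumA = A.
  apply: (irr_sorted_eq ltn_trans ltnn enumA_sorted A_sorted) => k.
  by rewrite mem_filter mem_iota add0n /= andb_idr //; apply: (allP A_lt).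
exact: set_nth_default.
Qed.

Lemma seq_inc_index x : sorted ltn A -> all (gtn N) A -> x \in A ->
  seq_inc (index x A) = x.
Proof. by move=> A_sorted A_lt xA; rewrite seq_incE ?nth_index ?index_mem. Qed.
End SeqInc.

Fixpoint bounded_seqs (n N : nat) : seq (seq nat) :=
  if n is n'.+1 then [seq x :: t | x <- iota 0 N, t <- bounded_seqs n' N]
  else [:: [::]].

Lemma mem_bounded_seqs n N t :
  size t = n -> all (gtn N) t -> t \in bounded_seqs n N.
Proof.
elim: n t => [|n IHn] [|x t] //= [size_t] /andP[lt_x lt_t].
by apply/allpairsP; exists (x, t); rewrite mem_iota IHn.
Qed.

Lemma index_ltn_sorted (s : seq nat) x y : sorted ltn s ->
  x \in s -> y \in s -> x < y -> index x s < index y s.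
Proof.
move=> s_sorted xs ys lt_xy; rewrite ltnNge; apply/negP => le_yx.
have s_leq : sorted leq s by apply: sub_sorted s_sorted => a b /ltnW.
by have := sorted_leq_index leq_trans leqnn s_leq y x ys xs le_yx; rewrite leqNgt lt_xy.
Qed.

Section IncFactor.
Variables (M N : nat) (s : seq nat).
Hypotheses (s_sorted : sorted ltn s) (s_size : size s <= N).

Lemma inc_ranks_in_bounded_seqs (pi : Inc) : (forall i, i < M -> pi i \in s) ->
  exists2 A, A \in bounded_seqs M N &
    forall i, i < M -> seq_inc N A i = index (pi i) s.
Proof.
move=> pi_s; pose A := [seq index (pi i) s | i <- iota 0 M].
have size_A : size A = M by rewrite size_map size_iota.
have A_lt : all (gtn N) A.
  apply/allP => x /mapP[i]; rewrite mem_iota => /andP[_ lt_i] ->.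
  by rewrite /= (leq_trans _ s_size) // index_mem pi_s.
exists A; first exact: mem_bounded_seqs.
move=> i lt_i; rewrite seq_incE ?size_A //.
  by rewrite (nth_map 0) ?size_iota // nth_iota.
apply: (homo_sorted_in (P := gtn M)); last exact: iota_ltn_sorted.
  by move=> j k lt_j lt_k lt_jk; apply: index_ltn_sorted (inc_mono pi lt_jk); rewrite ?pi_s.
by apply/allP => j; rewrite mem_iota.
Qed.
End IncFactor.

Lemma inc_pair_factor (M : nat) (pi sigma : Inc) :
  exists tau : Inc, exists2 A0, A0 \in bounded_seqs M (2 * M) &
    exists2 A1, A1 \in bounded_seqs M (2 * M) &
    forall i, i < M ->
      pi i = tau (seq_inc (2 * M) A0 i) /\ sigma i = tau (seq_inc (2 * M) A1 i).
Proof.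
pose B := pi M + sigma M.
pose U := [seq pi i | i <- iota 0 M] ++ [seq sigma i | i <- iota 0 M].
pose s := [seq x <- iota 0 B | x \in U].
have s_sorted : sorted ltn s by exact/sorted_filter/iota_ltn_sorted/ltn_trans.
have s_size : size s <= 2 * M.
  have -> : 2 * M = size U by rewrite size_cat !size_map size_iota mul2n addnn.
  apply: uniq_leq_size; first exact/filter_uniq/iota_uniq.
  by move=> x; rewrite mem_filter => /andP[].
have in_s x : x \in U -> x < B -> x \in s by rewrite mem_filter mem_iota => ->.
have pi_s i : i < M -> pi i \in s.
  move=> lt_i; apply: in_s; first by rewrite mem_cat map_f ?mem_iota.
  exact: leq_trans (inc_mono pi lt_i) (leq_addr _ _).
have sigma_s i : i < M -> sigma i \in s.
  move=> lt_i; apply: in_s; first by rewrite mem_cat map_f ?mem_iota ?orbT.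
  exact: leq_trans (inc_mono sigma lt_i) (leq_addl _ _).
have [A0 A0_bnd A0E] := inc_ranks_in_bounded_seqs s_sorted s_size pi_s.
have [A1 A1_bnd A1E] := inc_ranks_in_bounded_seqs s_sorted s_size sigma_s.
have s_lt : all (gtn B) s by apply/allP => x; rewrite mem_filter mem_iota => /andP[].
exists (seq_inc B s), A0 => //; exists A1 => // i lt_i.
by rewrite A0E // A1E // !seq_inc_index ?pi_s ?sigma_s.
Qed.

Import GRing.Theory.

Section IncAction.
Variable K : fieldType.
Local Open Scope ring_scope.
Local Open Scope fset_scope.

Definition inc_monom (pi : Inc) (m : {cmonom Var}) : KX K :=
  \prod_(v <- finsupp (cmonom_val m)) yvar K (inc_var pi v) ^+ m v.

Lemma inc_monom_widen (pi : Inc) (m : {cmonom Var}) (d : {fset Var}) :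
  finsupp (cmonom_val m) `<=` d ->
  inc_monom pi m = \prod_(v <- d) yvar K (inc_var pi v) ^+ m v.
Proof.
move=> sub_d; rewrite /inc_monom (big_fset_incl _ sub_d) //= => v _ v_notin.
by have /eqP -> : m v == 0%N by rewrite cmE_eq0.
Qed.

Lemma inc_monom_is_mmorphism (pi : Inc) : mmorphism (inc_monom pi).
Proof.
split; last by rewrite /inc_monom mdom1 big_nil.
move=> m1 m2; set d := finsupp (cmonom_val m1) `|` finsupp (cmonom_val m2).
rewrite (@inc_monom_widen _ m1 d) ?fsubsetUl // (@inc_monom_widen _ m2 d) ?fsubsetUr //.
rewrite (@inc_monom_widen _ _ d) ?mdomD // -big_split /=.
by apply: eq_bigr => v _; rewrite cmM exprD.
Qed.

HB.instance Definition _ (pi : Inc) :=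
  isMultiplicative.Build {cmonom Var} (KX K) (inc_monom pi)
    (inc_monom_is_mmorphism pi).

Lemma inc_actE (pi : Inc) (f : KX K) :
  inc_act pi f = mmap (@malgC _ K) (inc_monom pi) f.
Proof. by []. Qed.

Lemma inc_act_is_zmod_morphism (pi : Inc) : zmod_morphism (@inc_act K pi).
Proof. by move=> f g; rewrite !inc_actE raddfB. Qed.

Lemma inc_act_is_monoid_morphism (pi : Inc) : monoid_morphism (@inc_act K pi).
Proof.
split=> [|f g]; rewrite !inc_actE; [exact: rmorph1 | exact: rmorphM].
Qed.

HB.instance Definition _ (pi : Inc) :=
  GRing.isZmodMorphism.Build (KX K) (KX K) (@inc_act K pi)
    (inc_act_is_zmod_morphism pi).
HB.instance Definition _ (pi : Inc) :=
  GRing.isMonoidMorphism.Build (KX K) (KX K) (@inc_act K pi)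
    (inc_act_is_monoid_morphism pi).

Lemma inc_act_yvar (pi : Inc) (v : Var) :
  inc_act pi (yvar K v) = yvar K (inc_var pi v).
Proof.
rewrite inc_actE /yvar mmapU /inc_monom mdomU big_seq_fset1 cmUU expr1.
by rewrite -[X in X * _ = _]/(1%:MP) mpolyC1E mul1r.
Qed.

Lemma inc_act_comp (tau pi : Inc) (f : KX K) :
  inc_act tau (inc_act pi f) = inc_act (inc_comp tau pi) f.
Proof.
rewrite [inc_act pi f]inc_actE mmapE [inc_act (inc_comp _ _) f]inc_actE mmapE.
rewrite raddf_sum; apply: eq_bigr => m _.
change (inc_act tau ((f@_m)%:MP * inc_monom pi m)
        = (f@_m)%:MP * inc_monom (inc_comp tau pi) m).
rewrite rmorphM /= [inc_act tau _]inc_actE mmapC; congr (_ * _).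
rewrite /inc_monom rmorph_prod; apply: eq_bigr => v _.
by rewrite rmorphXn /= inc_act_yvar inc_var_comp.
Qed.
End IncAction.

Section Locality.
Variable K : fieldType.

Definition var_bound (f : KX K) : nat :=
  \max_(m <- msupp f) \max_(v <- finsupp (cmonom_val m)) (val v).1.+1.

Lemma inc_act_local (pi rho : Inc) (f : KX K) :
  (forall i, i < var_bound f -> pi i = rho i) -> inc_act pi f = inc_act rho f.
Proof.
move=> pi_rho; rewrite !inc_actE /mmap; apply: eq_big_seq => m m_supp; apply: congr1.
rewrite /inc_monom; apply: eq_big_seq => v v_supp.
apply: (congr1 (fun w => (yvar K w ^+ m v)%R)); apply: val_inj.
have lt_v1 : (val v).1 < var_bound f.
  apply: (@bigmaxn_sup_seq _ _ m) => //.
  by apply: (@bigmaxn_sup_seq _ _ v).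
have lt_v2 : (val v).2 < var_bound f by apply: leq_ltn_trans (valP v) lt_v1.
by rewrite /= !pi_rho.
Qed.

Lemma inc_act_factor (pi tau rho : Inc) (f : KX K) :
  (forall i, i < var_bound f -> pi i = tau (rho i)) ->
  inc_act pi f = inc_act tau (inc_act rho f).
Proof. by move=> pi_E; rewrite inc_act_comp; apply: inc_act_local. Qed.
End Locality.

Theorem lemma3p4 (K : fieldType) (b0 b1 : KX K) :
  exists s : seq (KX K * KX K),
    forall q : KX K * KX K,
      (orbit1 b0 q.1 /\ orbit1 b1 q.2) <->
      (exists2 p, p \in s & orbit2 p q).
Proof.
pose M := maxn (var_bound b0) (var_bound b1).
pose rep A0 A1 := (inc_act (seq_inc (2 * M) A0) b0, inc_act (seq_inc (2 * M) A1) b1).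
exists [seq rep A0 A1 | A0 <- bounded_seqs M (2 * M), A1 <- bounded_seqs M (2 * M)].
case=> q0 q1 /=; split.
- case=> -[pi ->] [sigma ->].
  have [tau [A0 A0_bnd [A1 A1_bnd piE]]] := inc_pair_factor M pi sigma.
  exists (rep A0 A1); first exact: (allpairs_f rep A0_bnd A1_bnd).
  exists tau; apply: f_equal2; apply: inc_act_factor => i lt_i.
    by case: (piE i (leq_trans lt_i (leq_maxl _ _))).
  by case: (piE i (leq_trans lt_i (leq_maxr _ _))).
- case=> _ /allpairsP[[A0 A1] [_ _ ->]] [tau [-> ->]].
  split; [exists (inc_comp tau (seq_inc (2 * M) A0))
         |exists (inc_comp tau (seq_inc (2 * M) A1))]; exact: inc_act_comp.
Qed.
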